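(* Let $A\in(0,1)$, $M<0$, $Q>0$, $S>0$ and consider the planar system $$\frac{du}{d\tau}=u^2\big((u+A)(1-u)(u-M)-Qv\big),\qquad \frac{dv}{d\tau}=S(u+A)(u-v)v .$$ Put $T=1-A+M$, and let $P=(\tilde u,\tilde u)$ with $\tilde u>0$ be a positive equilibrium of the system. Define $$f(\tilde u)=\frac{\tilde u\big((1-\tilde u)(\tilde u-M)+(\tilde u+A)(1-2\tilde u+M)\big)}{A+\tilde u}.$$ Then $P$ is: (i) a saddle point if $\tilde u^2(2\tilde u-T)-AM<0$; (ii) a repeller if $\tilde u^2(2\tilde u-T)-AM>0$ and $S<f(\tilde u)$; (iii) an attractor if $\tilde u^2(2\tilde u-T)-AM>0$ and $S>f(\tilde u)$.
   Context: The positive equilibria of the system are exactly the points $(u,u)$ with $u>0$ and $(u+A)(1-u)(u-M)=Qu$. *)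

From Stdlib Require Import Reals.
From Coquelicot Require Import Coquelicot.
Open Scope R_scope.

Definition Fu (A M Q : R) (u v : R) : R :=
  u ^ 2 * ((u + A) * (1 - u) * (u - M) - Q * v).
Definition Fv (A S : R) (u v : R) : R :=
  S * (u + A) * (u - v) * v.

Definition J11 A M Q u0 v0 := Derive (fun x => Fu A M Q x v0) u0.
Definition J12 A M Q u0 v0 := Derive (fun y => Fu A M Q u0 y) v0.
Definition J21 A S u0 v0 := Derive (fun x => Fv A S x v0) u0.
Definition J22 A S u0 v0 := Derive (fun y => Fv A S u0 y) v0.

Definition eigen2 (a b c d : R) (l : C) : Prop :=
  Cminus (Cmult (Cminus (RtoC a) l) (Cminus (RtoC d) l)) (Cmult (RtoC b) (RtoC c))
  = RtoC 0.

Definition saddle2 (a b c d : R) : Prop :=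
  (exists l, eigen2 a b c d l /\ Im l = 0 /\ Re l < 0) /\
  (exists l, eigen2 a b c d l /\ Im l = 0 /\ Re l > 0).
Definition repeller2 (a b c d : R) : Prop :=
  forall l, eigen2 a b c d l -> Re l > 0.
Definition attractor2 (a b c d : R) : Prop :=
  forall l, eigen2 a b c d l -> Re l < 0.

Definition jac_saddle A M Q S u0 v0 :=
  saddle2 (J11 A M Q u0 v0) (J12 A M Q u0 v0) (J21 A S u0 v0) (J22 A S u0 v0).
Definition jac_repeller A M Q S u0 v0 :=
  repeller2 (J11 A M Q u0 v0) (J12 A M Q u0 v0) (J21 A S u0 v0) (J22 A S u0 v0).
Definition jac_attractor A M Q S u0 v0 :=
  attractor2 (J11 A M Q u0 v0) (J12 A M Q u0 v0) (J21 A S u0 v0) (J22 A S u0 v0).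

Definition fS (A M ut : R) : R :=
  ut * ((1 - ut) * (ut - M) + (ut + A) * (1 - 2 * ut + M)) / (A + ut).

From Stdlib Require Import Reals Lra Psatz.
From Coquelicot Require Import Coquelicot.
Open Scope R_scope.

(* At a positive equilibrium (u, u) the prey equation gives [Q u = (u + A)(1 - u)(u - M)],
   which makes the Jacobian explicit: its determinant is
   [S (u + A) u^2 (u^2 (2u - T) - A M)] and its trace is [u (A + u) (f(u) - S)].
   A real 2x2 matrix with negative determinant has two real eigenvalues of opposite
   signs, and when the determinant is positive the real parts of both eigenvalues have
   the sign of the trace. *)

Lemma eigen2_iff a b c d x y :
  eigen2 a b c d (x, y) <->
  x * x - y * y - (a + d) * x + (a * d - b * c) = 0 /\ y * (2 * x - (a + d)) = 0.
Proof.
  unfold eigen2, Cminus, Cmult, Cplus, Copp, RtoC; simpl.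
  split.
  - intros H; injection H; intros Him Hre; split; nra.
  - intros [Hre Him]; f_equal; nra.
Qed.

Lemma saddle2_det_neg a b c d : a * d - b * c < 0 -> saddle2 a b c d.
Proof.
  intros Hdet.
  set (t := a + d); set (s := sqrt (t * t - 4 * (a * d - b * c))).
  assert (Hs2 : s * s = t * t - 4 * (a * d - b * c)) by (apply sqrt_sqrt; nra).
  assert (Hs : 0 <= s) by apply sqrt_pos.
  assert (Hst : t < s /\ - t < s) by (split; nra).
  split.
  - exists ((t - s) / 2, 0); rewrite eigen2_iff; simpl; unfold t in *; repeat split; nra.
  - exists ((t + s) / 2, 0); rewrite eigen2_iff; simpl; unfold t in *; repeat split; nra.
Qed.

(* Real eigenvalues [x] satisfy [x (a + d) = x^2 + det > 0]; non-real ones have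
   [2 Re l = a + d]. *)
Lemma eigen2_Re_mul_trace_pos a b c d l :
  a * d - b * c > 0 -> a + d <> 0 -> eigen2 a b c d l -> 0 < Re l * (a + d).
Proof.
  destruct l as [x y]; simpl; intros Hdet Htr Hl.
  apply eigen2_iff in Hl as [Hre Him].
  destruct (Req_dec y 0) as [-> | Hy].
  - nra.
  - assert (Hx : 2 * x = a + d).
    { apply (Rmult_eq_reg_l y); [lra | exact Hy]. }
    assert (0 < (a + d) * (a + d)) by (apply Rsqr_pos_lt, Htr).
    nra.
Qed.

Lemma repeller2_det_pos_trace_pos a b c d :
  a * d - b * c > 0 -> a + d > 0 -> repeller2 a b c d.
Proof.
  intros Hdet Htr l Hl.
  pose proof (eigen2_Re_mul_trace_pos a b c d l Hdet ltac:(lra) Hl); nra.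
Qed.

Lemma attractor2_det_pos_trace_neg a b c d :
  a * d - b * c > 0 -> a + d < 0 -> attractor2 a b c d.
Proof.
  intros Hdet Htr l Hl.
  pose proof (eigen2_Re_mul_trace_pos a b c d l Hdet ltac:(lra) Hl); nra.
Qed.

Lemma J11_eq A M Q u v :
  J11 A M Q u v =
  2 * u * ((u + A) * (1 - u) * (u - M) - Q * v)
  + u ^ 2 * ((1 - u) * (u - M) + (u + A) * (1 - 2 * u + M)).
Proof. unfold J11, Fu; apply is_derive_unique; auto_derive; [easy | ring]. Qed.

Lemma J12_eq A M Q u v : J12 A M Q u v = - Q * u ^ 2.
Proof. unfold J12, Fu; apply is_derive_unique; auto_derive; [easy | ring]. Qed.

Lemma J21_eq A S u v : J21 A S u v = S * (2 * u + A - v) * v.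
Proof. unfold J21, Fv; apply is_derive_unique; auto_derive; [easy | ring]. Qed.

Lemma J22_eq A S u v : J22 A S u v = S * (u + A) * (u - 2 * v).
Proof. unfold J22, Fv; apply is_derive_unique; auto_derive; [easy | ring]. Qed.

Section PositiveEquilibrium.

Variables A M Q S u : R.
Hypothesis HA : 0 < A.
Hypothesis Hu : 0 < u.
Hypothesis Hequ : Fu A M Q u u = 0.

Lemma Q_equilibrium : Q * u = (u + A) * (1 - u) * (u - M).
Proof.
  unfold Fu in Hequ.
  assert (Hu2 : u ^ 2 <> 0) by (apply pow_nonzero; lra).
  destruct (Rmult_integral _ _ Hequ) as [H | H]; [contradiction | lra].
Qed.

Lemma jacobian_det_equilibrium :
  J11 A M Q u u * J22 A S u u - J12 A M Q u u * J21 A S u u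
  = S * (u + A) * u ^ 2 * (u ^ 2 * (2 * u - (1 - A + M)) - A * M).
Proof.
  rewrite J11_eq, J12_eq, J21_eq, J22_eq.
  replace (Q * u) with ((u + A) * (1 - u) * (u - M)) by (symmetry; apply Q_equilibrium).
  replace (- Q * u ^ 2) with (- (Q * u) * u) by ring.
  rewrite Q_equilibrium; ring.
Qed.

Lemma jacobian_trace_equilibrium :
  J11 A M Q u u + J22 A S u u = u * (A + u) * (fS A M u - S).
Proof.
  rewrite J11_eq, J22_eq.
  replace (Q * u) with ((u + A) * (1 - u) * (u - M)) by (symmetry; apply Q_equilibrium).
  unfold fS; field; lra.
Qed.

End PositiveEquilibrium.

Theorem lemma3 (A M Q S ut : R) :
  0 < A < 1 -> M < 0 -> 0 < Q -> 0 < S ->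
  0 < ut -> Fu A M Q ut ut = 0 -> Fv A S ut ut = 0 ->
  let T := 1 - A + M in
  (ut ^ 2 * (2 * ut - T) - A * M < 0 -> jac_saddle A M Q S ut ut) /\
  (ut ^ 2 * (2 * ut - T) - A * M > 0 -> S < fS A M ut -> jac_repeller A M Q S ut ut) /\
  (ut ^ 2 * (2 * ut - T) - A * M > 0 -> S > fS A M ut -> jac_attractor A M Q S ut ut).
Proof.
  intros [HA _] _ _ HS Hu Hequ _ T.
  pose proof (jacobian_det_equilibrium A M Q S ut Hu Hequ) as Hdet.
  pose proof (jacobian_trace_equilibrium A M Q S ut HA Hu Hequ) as Htr.
  assert (Hdet_scale : 0 < S * (ut + A) * ut ^ 2) by (apply Rmult_lt_0_compat; nra).
  assert (Htr_scale : 0 < ut * (A + ut)) by nra.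
  unfold jac_saddle, jac_repeller, jac_attractor, T in *.
  split; [| split]; intros Hsign.
  - apply saddle2_det_neg; rewrite Hdet; nra.
  - intros HSf; apply repeller2_det_pos_trace_pos; [rewrite Hdet | rewrite Htr]; nra.
  - intros HSf; apply attractor2_det_pos_trace_neg; [rewrite Hdet | rewrite Htr]; nra.
Qed.
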